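(* Assume $\phi(x)>0$ for all $x>0$ and $\phi$ is non-increasing. Let $i<j$ and let $d_{i+1},\dots,d_j\ge0$ be a fixed sequence of doses. Define two trajectories by $Y_{k+1}^+=F(Y_k^+)-\mathrm{BED}_T(d_{k+1})$ and $\widetilde Y_{k+1}^+=F(\widetilde Y_k^+)-\mathrm{BED}_T(d_{k+1})$ for $k=i,\dots,j-1$, starting from given values $Y_i^+$ and $\widetilde Y_i^+$. If $Y_i^+<\widetilde Y_i^+$, then $Y_j^+<\widetilde Y_j^+$ and $\widetilde Y_j^+-Y_j^+\le \widetilde Y_i^+-Y_i^+$.
   Context: Tumor parameter $\alpha_T>0$, $\beta_T>0$, $[\alpha/\beta]_T=\alpha_T/\beta_T$, and $\mathrm{BED}_T(d)=d\left(1+\frac{d}{[\alpha/\beta]_T}\right)$. Tumor growth follows $\frac{1}{x}\frac{dx}{dt}=\phi(x)$ with $\phi:(0,\infty)\to\mathbb{R}$ continuous and non-increasing. With $Y=\ln(\text{number of tumor cells})/\alpha_T$, $F$ denotes the map sending the value of $Y$ at time $t$ to its value at time $t+1$ under this ODE (one day of growth without radiation). *)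

From Stdlib Require Import Reals Lra.
From Coquelicot Require Import Coquelicot.
Open Scope R_scope.

Definition BED_T (alphaT betaT d : R) : R := d * (1 + d / (alphaT / betaT)).

(* F is the one-day growth map in the variable Y = ln(x)/alphaT, where the
   number of tumor cells x follows (1/x) dx/dt = phi(x): for every starting
   value y of Y, F y is the value of Y one time unit later, i.e. there is a
   (positive) solution x of x' = x phi(x) on [0,1] with x(0) = exp(alphaT y)
   and F y = ln(x(1)) / alphaT. *)
Definition is_growth_map (alphaT : R) (phi : R -> R) (F : R -> R) : Prop :=
  forall y : R, exists x : R -> R,
    x 0 = exp (alphaT * y) /\
    (forall t, 0 <= t <= 1 -> 0 < x t /\ is_derive x t (x t * phi (x t))) /\
    F y = ln (x 1) / alphaT.

(* Along a trajectory of x' = x phi(x), the function G(x) = int_1^x ds / (s phi(s))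
   increases at unit speed, so two trajectories keep a constant G-gap; since G is
   strictly increasing their order is preserved.  Then the log-gap ln x2 - ln x1
   has derivative phi(x2) - phi(x1) <= 0, so it shrinks.  Hence the growth map F
   is increasing and non-expansive, and subtracting the same dose from both
   trajectories each day preserves both properties. *)
From Stdlib Require Import Reals Lra Lia.
From Coquelicot Require Import Coquelicot.
Open Scope R_scope.

Lemma is_derive_MVT (f df : R -> R) (a b : R) :
  a < b -> (forall t, a <= t <= b -> is_derive f t (df t)) ->
  exists c, a <= c <= b /\ f b - f a = df c * (b - a).
Proof.
  intros Hab Hd.
  destruct (MVT_gen f a b df) as [c [Hc Heq]];
    rewrite ?Rmin_left, ?Rmax_right in * by lra.
  - intros t Ht; apply Hd; lra.
  - intros t Ht; apply continuity_pt_filterlim.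
    exact (ex_derive_continuous f t (ex_intro _ (df t) (Hd t ltac:(lra)))).
  - now exists c.
Qed.

Lemma is_derive_nonpos_le (f df : R -> R) (a b : R) :
  a <= b -> (forall t, a <= t <= b -> is_derive f t (df t)) ->
  (forall t, a <= t <= b -> df t <= 0) -> f b <= f a.
Proof.
  intros Hab Hd Hneg; destruct (Req_dec a b) as [<-|Hne]; [lra|].
  destruct (is_derive_MVT f df a b) as [c [Hc Heq]]; [lra|exact Hd|].
  specialize (Hneg c Hc); nra.
Qed.

Lemma is_derive_zero_eq (f : R -> R) (a b : R) :
  a <= b -> (forall t, a <= t <= b -> is_derive f t 0) -> f b = f a.
Proof.
  intros Hab Hd; apply Rle_antisym.
  - apply (is_derive_nonpos_le f (fun _ => 0)); auto; intros; lra.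
  - enough (- f b <= - f a) by lra.
    apply (is_derive_nonpos_le (fun t => - f t) (fun _ => 0)); [exact Hab| |intros; lra].
    intros t Ht; replace 0 with (opp 0) by (compute; ring).
    exact (is_derive_opp f t 0 (Hd t Ht)).
Qed.

Lemma is_derive_pos_lt (f df : R -> R) (a b : R) :
  a < b -> (forall t, a <= t <= b -> is_derive f t (df t)) ->
  (forall t, a <= t <= b -> 0 < df t) -> f a < f b.
Proof.
  intros Hab Hd Hpos.
  destruct (is_derive_MVT f df a b) as [c [Hc Heq]]; [lra|exact Hd|].
  specialize (Hpos c Hc); nra.
Qed.

Section GrowthTrajectories.

Variable phi : R -> R.
Hypothesis phi_cont : forall x, 0 < x -> continuous phi x.
Hypothesis phi_pos : forall x, 0 < x -> 0 < phi x.

Definition is_growth_trajectory (x : R -> R) : Prop :=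
  forall t, 0 <= t <= 1 -> 0 < x t /\ is_derive x t (x t * phi (x t)).

Definition growth_time (x : R) : R := RInt (fun s => / (s * phi s)) 1 x.

Lemma continuous_inv_rate (s : R) : 0 < s -> continuous (fun s => / (s * phi s)) s.
Proof.
  intros Hs; apply continuous_Rinv_comp.
  - apply (continuous_mult (fun s => s) phi); [apply continuous_id | now apply phi_cont].
  - specialize (phi_pos s Hs); nra.
Qed.

Lemma is_derive_growth_time (x : R) : 0 < x -> is_derive growth_time x (/ (x * phi x)).
Proof.
  intros Hx; apply (is_derive_RInt (fun s => / (s * phi s)) growth_time 1 x);
    [|now apply continuous_inv_rate].
  exists (mkposreal (x / 2) ltac:(lra)); intros y Hy.
  apply (RInt_correct (fun s => / (s * phi s)) 1 y), ex_RInt_continuous; intros s Hs.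
  apply continuous_inv_rate.
  change (Rabs (y - x) < x / 2) in Hy; apply Rabs_def2 in Hy.
  assert (0 < Rmin 1 y) by (apply Rmin_glb_lt; lra); lra.
Qed.

Lemma growth_time_lt (a b : R) : 0 < a -> a < b -> growth_time a < growth_time b.
Proof.
  intros Ha Hab; apply (is_derive_pos_lt _ (fun s => / (s * phi s))); auto.
  - intros s Hs; apply is_derive_growth_time; lra.
  - intros s Hs; specialize (phi_pos s ltac:(lra)).
    apply Rinv_0_lt_compat; nra.
Qed.

Lemma is_derive_growth_time_trajectory (x : R -> R) :
  is_growth_trajectory x ->
  forall t, 0 <= t <= 1 -> is_derive (fun t => growth_time (x t)) t 1.
Proof.
  intros Hx t Ht; destruct (Hx t Ht) as [Hpos Hd].
  replace 1 with (scal (x t * phi (x t)) (/ (x t * phi (x t)))).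
  - apply (is_derive_comp growth_time x t); [now apply is_derive_growth_time | exact Hd].
  - specialize (phi_pos _ Hpos); compute; field; lra.
Qed.

Lemma is_derive_ln_trajectory (x : R -> R) :
  is_growth_trajectory x ->
  forall t, 0 <= t <= 1 -> is_derive (fun t => ln (x t)) t (phi (x t)).
Proof.
  intros Hx t Ht; destruct (Hx t Ht) as [Hpos Hd].
  replace (phi (x t)) with (scal (x t * phi (x t)) (/ x t)).
  - apply (is_derive_comp ln x t); [now apply is_derive_ln | exact Hd].
  - compute; field; lra.
Qed.

Lemma growth_trajectory_lt (x1 x2 : R -> R) :
  is_growth_trajectory x1 -> is_growth_trajectory x2 -> x1 0 < x2 0 ->
  forall t, 0 <= t <= 1 -> x1 t < x2 t.
Proof.
  intros H1 H2 H0 t Ht.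
  assert (Hgap : growth_time (x2 t) - growth_time (x1 t)
                 = growth_time (x2 0) - growth_time (x1 0)).
  { apply (is_derive_zero_eq (fun t => growth_time (x2 t) - growth_time (x1 t))); [lra|].
    intros s Hs; replace 0 with (minus 1 1) by (compute; ring).
    apply (is_derive_minus (fun t => growth_time (x2 t)) (fun t => growth_time (x1 t)));
      apply is_derive_growth_time_trajectory; auto; lra. }
  assert (Hgap0 : growth_time (x1 0) < growth_time (x2 0)).
  { apply growth_time_lt; [apply H1; lra | exact H0]. }
  destruct (Rlt_or_le (x1 t) (x2 t)) as [|[Hlt|Heq]]; [assumption| |].
  - pose proof (growth_time_lt (x2 t) (x1 t) (proj1 (H2 t Ht)) Hlt); lra.
  - rewrite Heq in Hgap; lra.
Qed.

Hypothesis phi_noninc : forall x y, 0 < x -> x <= y -> phi y <= phi x.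

Lemma growth_trajectory_ln_gap_le (x1 x2 : R -> R) :
  is_growth_trajectory x1 -> is_growth_trajectory x2 -> x1 0 < x2 0 ->
  ln (x2 1) - ln (x1 1) <= ln (x2 0) - ln (x1 0).
Proof.
  intros H1 H2 H0.
  apply (is_derive_nonpos_le (fun t => ln (x2 t) - ln (x1 t))
           (fun t => phi (x2 t) - phi (x1 t))); [lra| |].
  - intros t Ht; apply (is_derive_minus (fun t => ln (x2 t)) (fun t => ln (x1 t)));
      now apply is_derive_ln_trajectory.
  - intros t Ht; pose proof (growth_trajectory_lt x1 x2 H1 H2 H0 t Ht).
    pose proof (phi_noninc (x1 t) (x2 t) (proj1 (H1 t Ht))); lra.
Qed.

End GrowthTrajectories.

Lemma growth_map_lt_nonexpansive (alphaT : R) (phi F : R -> R) :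
  0 < alphaT ->
  (forall x, 0 < x -> continuous phi x) ->
  (forall x, 0 < x -> 0 < phi x) ->
  (forall x y, 0 < x -> x <= y -> phi y <= phi x) ->
  is_growth_map alphaT phi F ->
  forall y1 y2, y1 < y2 -> F y1 < F y2 /\ F y2 - F y1 <= y2 - y1.
Proof.
  intros Halpha Hcont Hpos Hnoninc HF y1 y2 Hy.
  destruct (HF y1) as [x1 [E1 [D1 F1]]], (HF y2) as [x2 [E2 [D2 F2]]].
  assert (H0 : x1 0 < x2 0) by (rewrite E1, E2; apply exp_increasing; nra).
  assert (Hlt : x1 1 < x2 1) by (apply (growth_trajectory_lt phi); auto; lra).
  pose proof (growth_trajectory_ln_gap_le phi Hcont Hpos Hnoninc x1 x2 D1 D2 H0) as Hgap.
  rewrite E1, E2, !ln_exp in Hgap.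
  pose proof (ln_increasing _ _ (proj1 (D1 1 ltac:(lra))) Hlt).
  rewrite F1, F2; unfold Rdiv; split.
  - apply Rmult_lt_compat_r; [now apply Rinv_0_lt_compat | assumption].
  - replace (y2 - y1) with ((alphaT * y2 - alphaT * y1) * / alphaT) by (field; lra).
    rewrite <- Rmult_minus_distr_r.
    apply Rmult_le_compat_r; [left; now apply Rinv_0_lt_compat | exact Hgap].
Qed.

Lemma shifted_orbits_lt_gap_le (f : R -> R) (c Y Yt : nat -> R) (i j : nat) :
  (forall a b, a < b -> f a < f b /\ f b - f a <= b - a) ->
  (i <= j)%nat ->
  (forall k, (i <= k < j)%nat -> Y (S k) = f (Y k) - c (S k)) ->
  (forall k, (i <= k < j)%nat -> Yt (S k) = f (Yt k) - c (S k)) ->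
  Y i < Yt i ->
  Y j < Yt j /\ Yt j - Y j <= Yt i - Y i.
Proof.
  intros Hf Hij HY HYt Hi; induction Hij as [|j Hij IH].
  - lra.
  - destruct IH as [Hlt Hle]; [intros k Hk; apply HY; lia | intros k Hk; apply HYt; lia|].
    rewrite HY, HYt by lia.
    destruct (Hf (Y j) (Yt j) Hlt); lra.
Qed.

Theorem lemma2
  (alphaT betaT : R) (phi F : R -> R)
  (halpha : 0 < alphaT) (hbeta : 0 < betaT)
  (phi_cont : forall x, 0 < x -> continuous phi x)
  (phi_pos : forall x, 0 < x -> 0 < phi x)
  (phi_noninc : forall x y, 0 < x -> x <= y -> phi y <= phi x)
  (hF : is_growth_map alphaT phi F)
  (i j : nat) (hij : (i < j)%nat)
  (d : nat -> R) (hd : forall k, (i < k <= j)%nat -> 0 <= d k)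
  (Y Yt : nat -> R)
  (hY : forall k, (i <= k < j)%nat -> Y (S k) = F (Y k) - BED_T alphaT betaT (d (S k)))
  (hYt : forall k, (i <= k < j)%nat -> Yt (S k) = F (Yt k) - BED_T alphaT betaT (d (S k)))
  (hi : Y i < Yt i) :
  Y j < Yt j /\ Yt j - Y j <= Yt i - Y i.
Proof.
  (* The same dose is subtracted from both trajectories. *)
  apply (shifted_orbits_lt_gap_le F (fun k => BED_T alphaT betaT (d k))); auto; [|lia].
  exact (growth_map_lt_nonexpansive alphaT phi F halpha phi_cont phi_pos phi_noninc hF).
Qed.
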